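(* Let $H$ be an infinite-dimensional complex Hilbert space, let $\mathcal{G}_{\infty}(H)$ be the set of all closed subspaces of $H$ whose dimension and codimension are both infinite, and let $f:\mathcal{G}_{\infty}(H)\to\mathcal{G}_{\infty}(H)$ send every pair of subspaces to an equivalent pair of subspaces. Then $f$ is inclusion preserving in both directions: for $X,Y\in\mathcal{G}_{\infty}(H)$, $X\subset Y$ if and only if $f(X)\subset f(Y)$.
   Context: Two pairs of closed subspaces are equivalent if some linear (norm-preserving, not necessarily surjective) isometry of $H$ transfers one pair (as an unordered pair) to the other; $f$ sends every pair to an equivalent pair if for all $X,Y$ there is a linear isometry $M$ with $\{f(X),f(Y)\}=\{M(X),M(Y)\}$. *)

From HB Require Import structures.
From mathcomp Require Import all_boot all_order all_algebra.
From mathcomp Require Import complex.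
From mathcomp Require Import boolp classical_sets reals.
Set Implicit Arguments. Unset Strict Implicit. Unset Printing Implicit Defensive.
Import Order.TTheory GRing.Theory Num.Theory.
Local Open Scope ring_scope.
Local Open Scope classical_set_scope.

Section Hilbert.
Variables (R : realType) (V : lmodType R[i]) (ip : V -> V -> R[i]).

Definition inner_product : Prop :=
  [/\ (forall (a : R[i]) (u v w : V), ip (a *: u + v) w = a * ip u w + ip v w),
      (forall u v : V, ip u v = (ip v u)^*),
      (forall v : V, 0 <= ip v v) &
      (forall v : V, ip v v = 0 -> v = 0)].

Definition hnorm (v : V) : R := Num.sqrt (complex.Re (ip v v)).

Definition hcauchy (u : nat -> V) : Prop :=
  forall e : R, 0 < e -> exists N : nat,
    forall m n, (N <= m)%N -> (N <= n)%N -> hnorm (u m - u n) < e.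

Definition hconverges (u : nat -> V) (l : V) : Prop :=
  forall e : R, 0 < e -> exists N : nat, forall n, (N <= n)%N -> hnorm (u n - l) < e.

Definition hcomplete : Prop :=
  forall u : nat -> V, hcauchy u -> exists l, hconverges u l.

Definition is_hilbert : Prop := inner_product /\ hcomplete.

(* linear independence of a finite family modulo a subset S
   (S = [set 0] gives plain linear independence) *)
Definition lin_indep_mod (S : set V) (n : nat) (v : 'I_n -> V) : Prop :=
  forall c : 'I_n -> R[i], S (\sum_(i < n) c i *: v i) -> forall i, c i = 0.

Definition inf_dim (S : set V) : Prop :=
  forall n : nat, exists v : 'I_n -> V, (forall i, S (v i)) /\ lin_indep_mod [set 0] v.

(* infinite codimension of the linear subspace S: H/S is infinite-dimensional *)
Definition inf_codim (S : set V) : Prop :=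
  forall n : nat, exists v : 'I_n -> V, lin_indep_mod S v.

Definition lin_subspace (S : set V) : Prop :=
  [/\ S 0, (forall u v, S u -> S v -> S (u + v)) &
      (forall (a : R[i]) v, S v -> S (a *: v))].

Definition hclosed (S : set V) : Prop :=
  forall (u : nat -> V) (l : V), (forall n, S (u n)) -> hconverges u l -> S l.

Definition closed_subspace (S : set V) : Prop := lin_subspace S /\ hclosed S.

Definition Ginf (S : set V) : Prop :=
  [/\ closed_subspace S, inf_dim S & inf_codim S].

Definition lin_isometry (M : V -> V) : Prop :=
  (forall (a : R[i]) (u v : V), M (a *: u + v) = a *: M u + M v) /\
  (forall v, hnorm (M v) = hnorm v).

(* {f X, f Y} = {M X, M Y} as unordered pairs *)
Definition pair_equiv (X Y X' Y' : set V) : Prop :=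
  exists M : V -> V, lin_isometry M /\
    ((X' = M @` X /\ Y' = M @` Y) \/ (X' = M @` Y /\ Y' = M @` X)).

End Hilbert.

From HB Require Import structures.
From mathcomp Require Import all_boot all_order all_algebra.
From mathcomp Require Import complex.
From mathcomp Require Import boolp classical_sets reals.
Set Implicit Arguments. Unset Strict Implicit. Unset Printing Implicit Defensive.
Import Order.TTheory GRing.Theory Num.Theory.
Local Open Scope ring_scope.
Local Open Scope classical_set_scope.

(* An injective linear map M satisfies X ⊆ Y <-> M X ⊆ M Y and sends subspaces
   meeting in 0 to subspaces meeting in 0; hence f preserves and reflects
   comparability and preserves trivial intersections.  If A ⊆ B and some
   W ⊆ B meets A trivially, then f A ⊆ f B is forced: otherwise f B ⊆ f A,
   and f W, comparable with f B and meeting f A trivially, would be 0.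
   For X ⊊ Y pick y ∈ Y \ X and an orthogonal sequence (e_n) in X orthogonal
   to y.  Inside Y, W := {y, e_0, e_2, ...}^⊥ and Z := W^⊥ lie in G_∞ and
   meet trivially, while y ∈ Z and e_1 ∈ X ∩ W make Z and X incomparable.
   If f Y ⊆ f X, the forced inclusion f Z ⊆ f Y ⊆ f X would make them
   comparable.  Conversely, f X ⊆ f Y makes X and Y comparable, and Y ⊆ X
   would give f X = f Y, hence X = Y. *)

Lemma image_subset_inj (T U : Type) (M : T -> U) (A B : set T) :
  injective M -> M @` A `<=` M @` B -> A `<=` B.
Proof.
move=> Minj AB a Aa; have [b Bb Mba] : (M @` B) (M a) by apply: AB; exists a.
by rewrite -(Minj _ _ Mba).
Qed.

Section InnerProduct.
Variables (R : realType) (V : lmodType R[i]) (ip : V -> V -> R[i]).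
Hypothesis hip : inner_product ip.

Lemma ipDl u v w : ip (u + v) w = ip u w + ip v w.
Proof. by have [h _ _ _] := hip; have := h 1 u v w; rewrite scale1r mul1r. Qed.

Lemma ip0l w : ip 0 w = 0.
Proof. by apply: (@addrI _ (ip 0 w)); rewrite -ipDl !addr0. Qed.

Lemma ipZl a u w : ip (a *: u) w = a * ip u w.
Proof. by have [h _ _ _] := hip; rewrite -[a *: u]addr0 h ip0l addr0. Qed.

Lemma ipBl u v w : ip (u - v) w = ip u w - ip v w.
Proof. by rewrite ipDl -scaleN1r ipZl mulN1r. Qed.

Lemma ip_suml n (F : 'I_n -> V) w :
  ip (\sum_(i < n) F i) w = \sum_(i < n) ip (F i) w.
Proof. by elim/big_rec2: _ => [|i x y _ <-]; rewrite ?ip0l ?ipDl. Qed.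

Lemma ipC u v : ip u v = (ip v u)^*.
Proof. by have [_ h _ _] := hip. Qed.

Lemma ip0r w : ip w 0 = 0.
Proof. by rewrite ipC ip0l conjC0. Qed.

Lemma ip_eq0_sym u v : ip u v = 0 -> ip v u = 0.
Proof. by move=> uv; rewrite ipC uv conjC0. Qed.

Lemma ip_ge0 v : 0 <= ip v v.
Proof. by have [_ _ h _] := hip. Qed.

Lemma ip_eq0 v : ip v v = 0 -> v = 0.
Proof. by have [_ _ _ h] := hip; apply: h. Qed.

Lemma ip_real v : (complex.Re (ip v v))%:C%C = ip v v.
Proof. exact/RRe_real/ger0_real/ip_ge0. Qed.

Lemma cauchy_schwarz w a : ip w a * ip a w <= ip w w * ip a a.
Proof.
have [a0|a_neq0] := eqVneq (ip a a) 0.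
  by rewrite (ip_eq0 a0) !ip0r !ip0l !mulr0.
have a_gt0 : 0 < ip a a by rewrite lt_def a_neq0 ip_ge0.
pose z := w - (ip w a / ip a a) *: a.
have za : ip z a = 0 by rewrite ipBl ipZl divfK // subrr.
have zz : ip z z = ip w w - ip a w / ip a a * ip w a.
  rewrite {1}/z ipBl ipZl (ip_eq0_sym za) mulr0 subr0.
  rewrite ipC ipBl ipZl rmorphB rmorphM /= -!ipC fmorph_div /= -ipC.
  by rewrite geC0_conj ?ip_ge0.
by have := ip_ge0 z; rewrite zz subr_ge0 mulrAC ler_pdivrMr // mulrC.
Qed.

Lemma hconverges_ip_lt u l : hconverges ip u l ->
  forall e, 0 < e -> exists n, ip (u n - l) (u n - l) < e.
Proof.
move=> ul e e_gt0; rewrite -(RRe_real (gtr0_real e_gt0)).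
have Re_e_gt0 : 0 < complex.Re e by move: e_gt0; rewrite ltcE => /andP[].
have [N hN] := ul _ (eqbRL (sqrtr_gt0 _) Re_e_gt0).
by exists N; have := hN N (leqnn N); rewrite /hnorm ltr_sqrt // -ltcR ip_real.
Qed.

(* Cauchy-Schwarz bounds |<l, a>|^2 = |<l - u n, a>|^2 by
   <u n - l, u n - l> <a, a>, which tends to 0. *)
Lemma hconverges_orth u l a :
  (forall n, ip (u n) a = 0) -> hconverges ip u l -> ip l a = 0.
Proof.
move=> ua ul; pose p := ip l a * ip a l.
apply/eqP; rewrite -mul_conjC_eq0 -ipC -/p.
have p_ge0 : 0 <= p by rewrite /p (ipC a l) mul_conjC_ge0.
have [//|p_neq0] := eqVneq p 0.
have p_gt0 : 0 < p by rewrite lt_def p_neq0 p_ge0.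
set c := ip a a; have c_ge0 : 0 <= c := ip_ge0 a.
have c1_gt0 : 0 < c + 1 := ltr_wpDl c_ge0 ltr01.
have [n dn] := hconverges_ip_lt ul (divr_gt0 p_gt0 c1_gt0).
set d := u n - l in dn.
have da : ip d a = - ip l a by rewrite ipBl ua sub0r.
have ad : ip a d = - ip a l by rewrite ipC da rmorphN /= -ipC.
have := cauchy_schwarz d a; rewrite da ad mulrNN -/p -/c => p_le.
have : p / (c + 1) * c < p by rewrite mulrAC ltr_pdivrMr // ltr_pM2l // ltrDl.
by move/lt_geF; rewrite (le_trans p_le) // ler_wpM2r // ltW.
Qed.

Lemma hnorm_eq0 v : hnorm ip v = 0 -> v = 0.
Proof.
rewrite /hnorm => /eqP; rewrite sqrtr_eq0 => v_le0.
apply: ip_eq0; rewrite -ip_real.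
suff -> : complex.Re (ip v v) = 0 by [].
by apply/eqP; rewrite eq_le v_le0 -lecR ip_real ip_ge0.
Qed.

Lemma lin_isometryB M u v : lin_isometry ip M -> M (u - v) = M u - M v.
Proof. by case=> hlin _; rewrite addrC -scaleN1r hlin scaleN1r addrC. Qed.

Lemma lin_isometry0 M : lin_isometry ip M -> M 0 = 0.
Proof. by move=> hM; have := lin_isometryB 0 0 hM; rewrite !subrr. Qed.

Lemma lin_isometry_inj M : lin_isometry ip M -> injective M.
Proof.
move=> hM u v Muv; apply/eqP; rewrite -subr_eq0; apply/eqP/hnorm_eq0.
have [_ <-] := hM; rewrite lin_isometryB // Muv subrr.
by rewrite /hnorm ip0l sqrtr0.
Qed.

Definition orth_compl (S : set V) : set V :=
  [set v | forall w, S w -> ip v w = 0].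

Lemma closed_subspace_orth_compl S : closed_subspace ip (orth_compl S).
Proof.
split; first split.
- by move=> w _; rewrite ip0l.
- by move=> u v uS vS w Sw; rewrite ipDl uS // vS // addr0.
- by move=> a v vS w Sw; rewrite ipZl vS // mulr0.
- by move=> u l uS ul w Sw; apply: hconverges_orth ul => n; apply: uS.
Qed.

Lemma closed_subspaceI S T :
  closed_subspace ip S -> closed_subspace ip T -> closed_subspace ip (S `&` T).
Proof.
move=> [[S0 SD SZ] Scl] [[T0 TD TZ] Tcl]; split; first split.
- by [].
- by move=> u v [Su Tu] [Sv Tv]; split; [apply: SD | apply: TD].
- by move=> a v [Sv Tv]; split; [apply: SZ | apply: TZ].
- move=> u l uST ul; split; first by apply: (Scl u) => // n; case: (uST n).
  by apply: (Tcl u) => // n; case: (uST n).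
Qed.

Lemma lin_subspace_sum (K : set V) n (c : 'I_n -> R[i]) (k : 'I_n -> V) :
  lin_subspace K -> (forall j, K (k j)) -> K (\sum_(j < n) c j *: k j).
Proof.
by case=> K0 KD KZ Kk; elim/big_rec: _ => // j x _ Kx; apply: KD => //; apply: KZ.
Qed.

(* m + 1 independent vectors of K and the m linear forms <., x>, x in s,
   give a nontrivial kernel. *)
Lemma inf_dim_orth_nz (K : set V) : lin_subspace K -> inf_dim K ->
  forall s : seq V, exists v, [/\ K v, v != 0 & forall x, x \in s -> ip v x = 0].
Proof.
move=> Ksub Kinf s; pose m := size s.
have [k [Kk k_indep]] := Kinf m.+1.
pose A : 'M[R[i]]_(m.+1, m) := \matrix_(j, i) ip (k j) (nth 0 s i).
have kerA_neq0 : kermx A != 0.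
  by rewrite -mxrank_eq0 -lt0n mxrank_ker subn_gt0 ltnS rank_leq_col.
have [i0 ci0] : exists i0, row i0 (kermx A) != 0.
  apply/existsP; apply: contraR kerA_neq0; rewrite negb_exists => /forallP h.
  apply/eqP/row_matrixP => i; rewrite row0.
  by apply/eqP; have := h i; rewrite negbK.
set c := row i0 (kermx A) in ci0.
have cA : c *m A = 0 by apply/sub_kermxP; apply: row_sub.
exists (\sum_(j < m.+1) c 0 j *: k j); split.
- exact: lin_subspace_sum.
- apply: contra ci0 => /eqP c_sum0; apply/eqP/rowP => j.
  by rewrite [RHS]mxE; apply: k_indep c_sum0 j.
- move=> x xs; have ix : (index x s < m)%N by rewrite index_mem.
  rewrite -(nth_index 0 xs) -[index x s]/(nat_of_ord (Ordinal ix)) ip_suml.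
  have := congr1 (fun M : 'M[R[i]]_(1, m) => M 0 (Ordinal ix)) cA.
  rewrite !mxE => cA_ix; rewrite -[RHS]cA_ix.
  by apply: eq_bigr => j _; rewrite ipZl [A _ _]mxE.
Qed.

Lemma inf_dim_orth_seq (K : set V) (s : seq V) : lin_subspace K -> inf_dim K ->
  exists e : nat -> V, [/\ forall n, K (e n), forall n, e n != 0,
    forall n x, x \in s -> ip (e n) x = 0 &
    forall m n, m != n -> ip (e m) (e n) = 0].
Proof.
move=> Ksub Kinf; have [g hg] := choice (inf_dim_orth_nz Ksub Kinf).
pose t n := iter n (fun t => g t :: t) s.
have s_t x n : x \in s -> x \in t n.
  by move=> xs; elim: n => //= n IH; rewrite in_cons IH orbT.
have g_t k n : (k < n)%N -> g (t k) \in t n.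
  elim: n => // n IH; rewrite ltnS leq_eqVlt => /orP [/eqP -> | /IH kn] /=;
    by rewrite in_cons ?eqxx ?kn ?orbT.
exists (fun n => g (t n)); split=> [n|n|n x xs|m n].
- by have [] := hg (t n).
- by have [] := hg (t n).
- by have [_ _ ->] := hg (t n) => //; apply: s_t.
- case: (ltngtP m n) => // [mn|nm] _.
    by apply: ip_eq0_sym; have [_ _ ->] := hg (t n) => //; apply: g_t.
  by have [_ _ ->] := hg (t m) => //; apply: g_t.
Qed.

Lemma orth_lin_indep n (v : 'I_n -> V) :
  (forall i j, i != j -> ip (v i) (v j) = 0) -> (forall i, v i != 0) ->
  lin_indep_mod [set 0] v.
Proof.
move=> v_orth v_neq0 c c_sum0 j.
have := congr1 (ip^~ (v j)) c_sum0; rewrite /= ip0l ip_suml (bigD1 j) //=.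
rewrite big1 ?addr0 => [|i ij]; last by rewrite ipZl v_orth ?mulr0.
rewrite ipZl => /eqP; rewrite mulf_eq0 => /orP [/eqP // | /eqP /ip_eq0 vj0].
by move: (v_neq0 j); rewrite vj0 eqxx.
Qed.

Lemma inf_dim_orth (S : set V) (e : nat -> V) : (forall n, S (e n)) ->
  (forall n, e n != 0) -> (forall m n, m != n -> ip (e m) (e n) = 0) -> inf_dim S.
Proof.
move=> Se e_neq0 e_orth n; exists (fun i : 'I_n => e i); split=> //.
by apply: orth_lin_indep => // i j ij; apply: e_orth.
Qed.

Lemma inf_codim_sub (S T : set V) : S `<=` T -> inf_codim T -> inf_codim S.
Proof. by move=> ST hT n; have [v hv] := hT n; exists v => c /ST; apply: hv. Qed.

Lemma Ginf_sub (S T : set V) :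
  closed_subspace ip S -> inf_dim S -> S `<=` T -> Ginf ip T -> Ginf ip S.
Proof.
by move=> Scl Sinf ST [_ _ Tcod]; split=> //; apply: inf_codim_sub Tcod.
Qed.

Lemma Ginf_neq0 (S : set V) : Ginf ip S -> exists2 v, S v & v != 0.
Proof.
move=> [_ Sinf _]; have [v [Sv v_indep]] := Sinf 1%N.
exists (v ord0) => //; apply/eqP => v0.
have := v_indep (fun _ => 1); rewrite big_ord1 scale1r v0 => /(_ erefl ord0).
by apply/eqP; rewrite oner_eq0.
Qed.

Lemma Ginf_incomparable_split (X Y : set V) :
  Ginf ip X -> Ginf ip Y -> X `<=` Y -> X <> Y ->
  exists Z W, [/\ Ginf ip Z, Ginf ip W, Z `<=` Y, W `<=` Y & Z `&` W `<=` [set 0]]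
    /\ ~ Z `<=` X /\ ~ X `<=` Z.
Proof.
move=> GX GY XY XneY; have [[Xsub _] Xinf _] := GX; have [Ycl _ _] := GY.
have [y Yy Xy] : exists2 y, Y y & ~ X y.
  apply: contrapT => hn; apply: XneY; apply/seteqP; split=> // v Yv.
  by apply: contrapT => Xv; apply: hn; exists v.
have [e [eX e_neq0 e_y e_orth]] := inf_dim_orth_seq [:: y] Xsub Xinf.
pose W := Y `&` orth_compl (y |` range (fun k => e k.*2)).
pose Z := Y `&` orth_compl W.
have Wcl : closed_subspace ip W.
  exact/closed_subspaceI/closed_subspace_orth_compl.
have Zcl : closed_subspace ip Z.
  exact/closed_subspaceI/closed_subspace_orth_compl.
have eW n : W (e n.*2.+1).
  split=> [|w [->|[k _ <-]]]; [exact: XY | by apply: e_y; rewrite mem_seq1 |].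
  by apply: e_orth; apply/negP => /eqP /(congr1 odd); rewrite /= !odd_double.
have eZ n : Z (e n.*2).
  by split=> [|w [_ wW]]; [exact: XY | apply/ip_eq0_sym/wW; right; exists n].
have yZ : Z y by split=> // w [_ wW]; apply/ip_eq0_sym/wW; left.
have ZW : Z `&` W `<=` [set 0] by move=> v [[_ vW] Wv]; apply/ip_eq0/vW.
exists Z, W; split; first split=> //.
- apply: Ginf_sub GY => //; last by move=> ? [].
  apply: (inf_dim_orth eZ) => // m n mn; apply: e_orth.
  by rewrite (inj_eq double_inj).
- apply: Ginf_sub GY => //; last by move=> ? [].
  apply: (inf_dim_orth eW) => // m n mn; apply: e_orth.
  by rewrite eqSS (inj_eq double_inj).
- by move=> ? [].
- by move=> ? [].
split; first by move/(_ y yZ).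
move=> XZ; have /eqP := e_neq0 1%N; apply.
exact: ZW (conj (XZ _ (eX 1%N)) (eW 0%N)).
Qed.

Lemma pair_equiv_sub X Y X' Y' :
  pair_equiv ip X Y X' Y' -> X' `<=` Y' -> X `<=` Y \/ Y `<=` X.
Proof.
move=> [M [hM [[-> ->]|[-> ->]]]] /(image_subset_inj (lin_isometry_inj hM));
  by [left | right].
Qed.

Lemma pair_equiv_comparable X Y X' Y' :
  pair_equiv ip X Y X' Y' -> X `<=` Y -> X' `<=` Y' \/ Y' `<=` X'.
Proof.
by move=> [M [_ [[-> ->]|[-> ->]]]] XY; [left | right]; apply: image_subset.
Qed.

Lemma pair_equiv_meet0 X Y X' Y' : pair_equiv ip X Y X' Y' ->
  X `&` Y `<=` [set 0] -> X' `&` Y' `<=` [set 0].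
Proof.
move=> [M [hM [[-> ->]|[-> ->]]]] XY _
    [[a Xa <-] [b Yb /(lin_isometry_inj hM) ba]];
  by subst b; rewrite /= -(lin_isometry0 hM); congr M; apply: XY.
Qed.

Lemma pair_equiv_eq X Y X' : pair_equiv ip X Y X' X' -> X = Y.
Proof.
move=> [M [hM hXY]]; have Minj := lin_isometry_inj hM.
have MXY : M @` X = M @` Y by case: hXY => -[<- <-].
by apply/seteqP; split; apply: image_subset_inj Minj _; rewrite MXY.
Qed.

End InnerProduct.

Section Preserving.
Variables (R : realType) (V : lmodType R[i]) (ip : V -> V -> R[i]).
Variable f : set V -> set V.
Hypothesis hip : inner_product ip.
Hypothesis hf : forall X, Ginf ip X -> Ginf ip (f X).
Hypothesis hpair :
  forall X Y, Ginf ip X -> Ginf ip Y -> pair_equiv ip X Y (f X) (f Y).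

Lemma f_subset_of_meet0 A B W : Ginf ip A -> Ginf ip B -> Ginf ip W ->
  A `<=` B -> W `<=` B -> A `&` W `<=` [set 0] -> f A `<=` f B.
Proof.
move=> GA GB GW AB WB AW.
case: (pair_equiv_comparable (hpair GA GB) AB) => // fBA; exfalso.
have fAW := pair_equiv_meet0 hip (hpair GA GW) AW.
case: (pair_equiv_comparable (hpair GW GB) WB) => [fWB | fBW].
- have [v fWv /eqP] := Ginf_neq0 (hf GW); apply; apply: fAW.
  by split=> //; apply/fBA/fWB.
- have [v fBv /eqP] := Ginf_neq0 (hf GB); apply; apply: fAW.
  by split; [apply: fBA | apply: fBW].
Qed.

Lemma f_subset X Y : Ginf ip X -> Ginf ip Y -> X `<=` Y -> f X `<=` f Y.
Proof.
move=> GX GY XY; have [-> //|XneY] := pselect (X = Y).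
case: (pair_equiv_comparable (hpair GX GY) XY) => // fYX.
have [Z [W [[GZ GW ZY WY ZW] [ZnX XnZ]]]] :=
  Ginf_incomparable_split hip GX GY XY XneY.
have fZY : f Z `<=` f Y := f_subset_of_meet0 GZ GY GW ZY WY ZW.
by case: (pair_equiv_sub hip (hpair GZ GX) (subset_trans fZY fYX)).
Qed.

End Preserving.

Theorem lemma1 (R : realType) (V : lmodType R[i]) (ip : V -> V -> R[i])
  (hH : is_hilbert ip) (hinf : inf_dim [set: V])
  (f : set V -> set V)
  (hf : forall X, Ginf ip X -> Ginf ip (f X))
  (hpair : forall X Y, Ginf ip X -> Ginf ip Y -> pair_equiv ip X Y (f X) (f Y)) :
  forall X Y, Ginf ip X -> Ginf ip Y -> (X `<=` Y <-> f X `<=` f Y).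
Proof.
have [hip _] := hH; move=> X Y GX GY.
split; first exact: f_subset hip hf hpair X Y GX GY.
move=> fXY; case: (pair_equiv_sub hip (hpair _ _ GX GY) fXY) => // YX.
have fYX := f_subset hip hf hpair GY GX YX.
have fXfY : f X = f Y by apply/seteqP.
by have := hpair _ _ GX GY; rewrite -fXfY => /(pair_equiv_eq hip) ->.
Qed.
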